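(* Let $\Gamma$ be a finite simplicial graph with vertex set $V=\{a_0,\ldots,a_{n-1}\}$. Every $w\in A(\Gamma)$ admits a unique canonical expression.
   Context: $A(\Gamma)=\langle V\mid[a,b]=1\text{ for }\{a,b\}\in E(\Gamma)\rangle$. The word length $\|w\|$ is the least $\ell\ge0$ with $w=s_1^{e_1}\cdots s_\ell^{e_\ell}$, $s_i\in V$, $e_i\in\{\pm1\}$. For a word $w=s_1^{e_1}\cdots s_\ell^{e_\ell}$ with $\ell=\|w\|$, $s_i\in V$, $e_i\in\{\pm1\}$, its right-counting vector $(f_1,\ldots,f_\ell)$ is given by $f_i=\min\|y\|$, the minimum over $y\in A(\Gamma)$ such that $s_i^{e_i}s_{i+1}^{e_{i+1}}\cdots s_\ell^{e_\ell}=x\,s_i^{e_i}\,y$ for some $x\in\langle \mathrm{lk}_\Gamma(s_i)\rangle$, where $\mathrm{lk}_\Gamma(s)$ is the set of vertices adjacent to $s$. Such a word is a canonical expression for $w$ if (A) $f_1\ge f_2\ge\cdots\ge f_\ell$, and (B) whenever $f_i=f_j$ with $i<j$ and $s_i=a_p$, $s_j=a_q$, we have $p<q$ and $[a_p,a_q]=1$. Uniqueness is as a word (sequence of letters $s_i^{e_i}$). *)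

From Stdlib Require Import Relations.
From mathcomp Require Import all_boot.
Set Implicit Arguments. Unset Strict Implicit. Unset Printing Implicit Defensive.

(* Right-angled Artin group A(Gamma) on vertices a_0..a_{n-1} = 'I_n,
   graph given by an edge relation e (symmetric, irreflexive).
   A letter (v, b) stands for a_v^{+1} if b = false and a_v^{-1} if b = true.
   Elements of A(Gamma) are words modulo the congruence generated by free
   cancellation and the commutations [a,b] = 1 for edges {a,b}. *)

Definition letter (n : nat) := ('I_n * bool)%type.
Definition word (n : nat) := seq (letter n).

Definition inv_letter n (x : letter n) : letter n := (x.1, ~~ x.2).

Inductive raag_step n (e : rel 'I_n) : word n -> word n -> Prop :=
| step_cancel (u v : word n) (x : letter n) :
    raag_step e (u ++ x :: inv_letter x :: v) (u ++ v)
| step_comm (u v : word n) (x y : letter n) :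
    e x.1 y.1 -> raag_step e (u ++ x :: y :: v) (u ++ y :: x :: v).

Definition raag_eq n (e : rel 'I_n) : relation (word n) :=
  clos_refl_sym_trans (word n) (@raag_step n e).

Definition is_min (P : nat -> Prop) (k : nat) : Prop :=
  P k /\ forall m, P m -> k <= m.

Definition geodesic n (e : rel 'I_n) (c : word n) : Prop :=
  forall d, raag_eq e d c -> size c <= size d.

(* the word x lies in the subgroup <lk(s)> (every element of that subgroup is
   represented by a word in the letters of lk(s) and their inverses) *)
Definition link_word n (e : rel 'I_n) (s : 'I_n) (x : word n) : Prop :=
  all (fun l : letter n => e s l.1) x.

(* f_i for the word c at position i (0-based):
   min ||y|| over y with s_i^{e_i} ... s_l^{e_l} = x s_i^{e_i} y, x in <lk(s_i)>.
   Since ||y|| is the least length of a word representing y, this is the least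
   size of a word y with that property. *)
Definition rc_entry n (e : rel 'I_n) (c : word n) (x0 : letter n) (i : nat)
  (k : nat) : Prop :=
  is_min (fun m => exists x y : word n,
             [/\ link_word e (nth x0 c i).1 x, size y = m &
                 raag_eq e (drop i c) (x ++ nth x0 c i :: y)]) k.

Definition rc_vector n (e : rel 'I_n) (c : word n) (f : seq nat) : Prop :=
  size f = size c /\
  forall x0 i, i < size c -> rc_entry e c x0 i (nth 0 f i).

Definition canonical_expr n (e : rel 'I_n) (w c : word n) : Prop :=
  raag_eq e c w /\ geodesic e c /\
  exists f : seq nat, rc_vector e c f /\
    (forall i j, i < j < size c -> nth 0 f j <= nth 0 f i) /\
    (forall x0 i j, i < j < size c -> nth 0 f i = nth 0 f j ->
        ((nth x0 c i).1 < (nth x0 c j).1)%N && e (nth x0 c i).1 (nth x0 c j).1).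

From Stdlib Require Import Relations.
From mathcomp Require Import all_boot zify.
Set Implicit Arguments. Unset Strict Implicit. Unset Printing Implicit Defensive.

(* Call vertices p, q dependent if p = q or they are not adjacent.  Two
   reduced words represent the same element of A(Gamma) iff, for every
   dependent pair {p, q}, they have the same projection onto the letters over
   p and q: left multiplication by a letter on reduced words respects these
   projections.  This solves the word problem, identifies the geodesics with
   the reduced words, and shows that equal reduced words differ only by
   commutations.  For a reduced word, f_i counts the letters after position i
   that cannot be commuted to the left past s_i.  A canonical expression is
   built greedily: among the letters that can be brought to the front, take
   one with the largest f, and among those the one over the smallest vertex.
   Two distinct canonical words for the same element would each start with a
   letter that occurs later in the other with the same f, and (B) compares
   their vertices both ways. *)

Section RightAngledArtinGroup.
Variables (n : nat) (e : rel 'I_n).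
Hypotheses (e_sym : symmetric e) (e_irr : irreflexive e).
Implicit Types (x y z : letter n) (u v w c Q R T : word n) (p q a b : 'I_n)
  (D : seq 'I_n).

Definition dep a b := (a == b) || ~~ e a b.

Lemma inv_letterK : involutive (@inv_letter n).
Proof. by case=> a s; rewrite /inv_letter /= negbK. Qed.

Lemma dep_sym a b : dep a b = dep b a.
Proof. by rewrite /dep eq_sym e_sym. Qed.

Lemma dep_refl a : dep a a.
Proof. by rewrite /dep eqxx. Qed.

Lemma edge_neq a b : e a b -> a != b.
Proof. by apply: contraTneq => ->; rewrite e_irr. Qed.

Lemma edge_ndep a b : e a b -> dep a b = false.
Proof. by move=> hab; rewrite /dep hab (negbTE (edge_neq hab)). Qed.

Lemma ndep_edge a b : dep a b = false -> e a b.
Proof. by rewrite /dep; case/norP => _ /negbNE. Qed.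

Lemma edge_notin_pair p q a b : dep p q -> (a == p) || (a == q) -> e a b ->
  ((b == p) || (b == q)) = false.
Proof.
move=> hpq ha hab; apply: contraTF hab => hb.
case/orP: ha => /eqP ->; case/orP: hb => /eqP ->; rewrite ?e_irr // ?[e q p]e_sym;
  by move: hpq; rewrite /dep; case: eqP => [->|_] /=; rewrite ?e_irr.
Qed.

Lemma dep_pair p q a b : dep p q -> (a == p) || (a == q) -> (b == p) || (b == q) ->
  dep a b.
Proof.
by move=> h; case/orP => /eqP ->; case/orP => /eqP ->; rewrite ?dep_refl // dep_sym.
Qed.

(** * Reduced words and the word problem *)

Fixpoint lmul x w : word n :=
  if w is y :: w' then
    if y == inv_letter x then w'
    else if e x.1 y.1 then y :: lmul x w' else x :: w
  else [:: x].

Fixpoint cancels x w : bool :=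
  if w is y :: w' then (y == inv_letter x) || e x.1 y.1 && cancels x w'
  else false.

Fixpoint reduced w : bool :=
  if w is x :: w' then ~~ cancels x w' && reduced w' else true.

Definition nf w := foldr lmul [::] w.

Definition proj p q w := [seq l <- w | (l.1 == p) || (l.1 == q)].

Definition proj_eq u v := forall p q, dep p q -> proj p q u = proj p q v.

Lemma proj_eq_sym u v : proj_eq u v -> proj_eq v u.
Proof. by move=> h p q hpq; rewrite h. Qed.

Lemma proj_eq_trans u v w : proj_eq u v -> proj_eq v w -> proj_eq u w.
Proof. by move=> h1 h2 p q hpq; rewrite h1 ?h2. Qed.

Lemma proj_eq_cons z u v : proj_eq u v -> proj_eq (z :: u) (z :: v).
Proof. by move=> h p q hpq; rewrite /proj /= -!/(proj p q _) h. Qed.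

Lemma proj_eq_consK z u v : proj_eq (z :: u) (z :: v) -> proj_eq u v.
Proof.
move=> h p q hpq; move: (h p q hpq); rewrite /proj /= -!/(proj p q _).
by case: ifP => // _ [].
Qed.

Lemma proj_eq_catl s u v : proj_eq u v -> proj_eq (s ++ u) (s ++ v).
Proof. by move=> h p q hpq; rewrite /proj !filter_cat -!/(proj p q _) h. Qed.

Lemma proj_eq_nil v : proj_eq [::] v -> v = [::].
Proof. by case: v => // z v /(_ z.1 z.1 (dep_refl _)); rewrite /proj /= eqxx. Qed.

Lemma proj_eq_size u v : proj_eq u v -> size u = size v.
Proof.
move=> h; apply: perm_size; apply/allP => z _.
have count_proj s : count_mem z s = count_mem z (proj z.1 z.1 s).
  by rewrite /proj count_filter; apply: eq_count => l /=; case: eqP => //= ->; rewrite eqxx.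
by rewrite /= (count_proj u) (count_proj v) h ?dep_refl.
Qed.

Lemma proj_lmul p q x w : dep p q ->
  proj p q (lmul x w) = if (x.1 == p) || (x.1 == q) then
    (if cancels x w then behead (proj p q w) else x :: proj p q w)
  else proj p q w.
Proof.
move=> hpq; elim: w => [|y w IH] /=; first by rewrite /proj /=; case: ifP.
case: eqP => [->|_]; first by rewrite /proj /=; case: ((x.1 == p) || (x.1 == q)).
case: ifP => hxy /=; last by rewrite /proj /=; case: ifP.
rewrite /proj /= -/(proj p q (lmul x w)) -/(proj p q w) IH.
case hx: ((x.1 == p) || (x.1 == q)); first by rewrite (edge_notin_pair hpq hx hxy).
by case: ifP.
Qed.

Lemma cancelsE x w :
  cancels x w = [forall b, dep x.1 b ==> (ohead (proj x.1 b w) == Some (inv_letter x))].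
Proof.
elim: w => [|y w IH] /=.
  by apply/esym/negbTE/negP => /forallP /(_ x.1); rewrite dep_refl.
case: eqP => [->|hy] /=.
  apply/esym/forallP => b; apply/implyP => _.
  by rewrite /proj /=; case: ifP => [_|]; rewrite /= eqxx.
case hxy: (e x.1 y.1) => /=.
  rewrite IH; apply: eq_forallb => b; case hb: (dep x.1 b) => //=.
  by rewrite /proj /= (@edge_notin_pair x.1 b x.1) ?eqxx.
apply/esym/negbTE/negP => /forallP /(_ y.1).
by rewrite /dep hxy orbT /= /proj /= eqxx orbT /= => /eqP [].
Qed.

Lemma cancels_proj_eq x u v : proj_eq u v -> cancels x u = cancels x v.
Proof.
move=> h; rewrite !cancelsE; apply: eq_forallb => b.
by case hb: (dep x.1 b) => //=; rewrite h.
Qed.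

Lemma lmul_proj_eq x u v : proj_eq u v -> proj_eq (lmul x u) (lmul x v).
Proof. by move=> h p q hpq; rewrite !proj_lmul // (cancels_proj_eq x h) h. Qed.

Lemma lmul_nocancel x w : ~~ cancels x w -> proj_eq (lmul x w) (x :: w).
Proof. by move=> h p q hpq; rewrite proj_lmul // (negbTE h) /proj /=; case: ifP. Qed.

Lemma cancels_lmul_edge x y w : e x.1 y.1 -> cancels x (lmul y w) = cancels x w.
Proof.
move=> hxy; rewrite !cancelsE; apply: eq_forallb => b.
case hb: (dep x.1 b) => //=.
by rewrite proj_lmul // (@edge_notin_pair x.1 b x.1) ?eqxx.
Qed.

Lemma lmul_comm x y w : e x.1 y.1 -> proj_eq (lmul x (lmul y w)) (lmul y (lmul x w)).
Proof.
move=> hxy p q hpq; rewrite !proj_lmul //.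
case hx: ((x.1 == p) || (x.1 == q)).
  by rewrite (edge_notin_pair hpq hx hxy) cancels_lmul_edge.
by case: ifP => // _; rewrite cancels_lmul_edge // e_sym.
Qed.

Lemma size_lmul x w : size (lmul x w) = if cancels x w then (size w).-1 else (size w).+1.
Proof.
elim: w => [|y w IH] //=.
case: eqP => //= _; case: ifP => //= _.
by rewrite IH; case hc: (cancels x w) => //; case: w hc {IH}.
Qed.

Lemma cancelsP x w : cancels x w -> exists Q R,
  [/\ w = Q ++ inv_letter x :: R, link_word e x.1 Q & lmul x w = Q ++ R].
Proof.
elim: w => [|y w IH] //=.
case: eqP => [->|_] /=; first by exists [::], w.
case hxy: (e x.1 y.1) => //= /IH [Q [R [-> hQ ->]]].
by exists (y :: Q), R; rewrite /link_word /= hxy.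
Qed.

Lemma lmul_link_cat x Q R : link_word e x.1 Q -> lmul x (Q ++ R) = Q ++ lmul x R.
Proof.
elim: Q => [|y Q IH] //= /andP [hy hQ].
have -> : (y == inv_letter x) = false by apply: contraTF hy => /eqP -> /=; rewrite e_irr.
by rewrite hy IH.
Qed.

Lemma cancels_link_cat x Q R : link_word e x.1 Q -> cancels x (Q ++ R) = cancels x R.
Proof.
elim: Q => [|y Q IH] //= /andP [hy hQ].
have -> : (y == inv_letter x) = false by apply: contraTF hy => /eqP -> /=; rewrite e_irr.
by rewrite hy IH.
Qed.

Lemma lmul_inv_link_cat z Q R : link_word e z.1 Q ->
  cancels (inv_letter z) (Q ++ z :: R) /\ lmul (inv_letter z) (Q ++ z :: R) = Q ++ R.
Proof. by move=> h; rewrite cancels_link_cat // lmul_link_cat //= inv_letterK eqxx. Qed.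

Lemma proj_link p q z Q : dep p q -> (z.1 == p) || (z.1 == q) ->
  link_word e z.1 Q -> proj p q Q = [::].
Proof.
move=> hpq hz; elim: Q => [|y Q IH] //= /andP [hy hQ].
by rewrite /proj /= (edge_notin_pair hpq hz hy) -/(proj p q Q) IH.
Qed.

Lemma proj_eq_link_move z Q R : link_word e z.1 Q -> proj_eq (Q ++ z :: R) (z :: Q ++ R).
Proof.
move=> h p q hpq; rewrite /proj /= !filter_cat /= -!/(proj p q _).
by case hz: ((z.1 == p) || (z.1 == q)); rewrite // (proj_link hpq hz h).
Qed.

Lemma reduced_catr Q R : reduced (Q ++ R) -> reduced R.
Proof. by elim: Q => //= y Q IH /andP [_ /IH]. Qed.

Lemma reduced_drop i c : reduced c -> reduced (drop i c).
Proof. by rewrite -{1}(cat_take_drop i c); apply: reduced_catr. Qed.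

Lemma reduced_lmul x w : reduced w -> reduced (lmul x w).
Proof.
elim: w => [|y w IH] //= /andP [hc hr].
case: eqP => // /eqP hy; case: ifP => hxy /=.
  by rewrite cancels_lmul_edge ?hc ?IH // e_sym.
by rewrite (negbTE hy) hxy hc hr.
Qed.

Lemma lmul_invK x w : reduced w -> proj_eq (lmul (inv_letter x) (lmul x w)) w.
Proof.
move=> hr; case hc: (cancels x w).
  have [Q [R [hw hQ ->]]] := cancelsP hc.
  rewrite lmul_link_cat // hw; apply: proj_eq_catl; apply: lmul_nocancel.
  by move: hr; rewrite hw => /reduced_catr /andP [].
apply: proj_eq_trans (lmul_proj_eq _ (lmul_nocancel (negbT hc))) _.
by rewrite /= inv_letterK eqxx.
Qed.

Lemma nf_reduced w : reduced (nf w).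
Proof. by elim: w => //= x w IH; apply: reduced_lmul. Qed.

Lemma nf_cat u v : nf (u ++ v) = foldr lmul (nf v) u.
Proof. by rewrite /nf foldr_cat. Qed.

Lemma foldr_lmul_proj_eq s u v : proj_eq u v -> proj_eq (foldr lmul u s) (foldr lmul v s).
Proof. by elim: s => //= x s IH /IH; apply: lmul_proj_eq. Qed.

Lemma nf_raag_eq u v : raag_eq e u v -> proj_eq (nf u) (nf v).
Proof.
elim=> {u v} [u v [u' v' x|u' v' x y hxy]|u|u v _ /proj_eq_sym|u v w _ h1 _ h2] //;
  rewrite ?nf_cat.
- apply: foldr_lmul_proj_eq.
  by have := lmul_invK (inv_letter x) (nf_reduced v'); rewrite inv_letterK.
- exact/foldr_lmul_proj_eq/lmul_comm.
- exact: proj_eq_trans h1 h2.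
Qed.

Lemma nf_reduced_proj_eq u : reduced u -> proj_eq (nf u) u.
Proof.
elim: u => //= x u IH /andP [hc hr].
exact: proj_eq_trans (lmul_proj_eq _ (IH hr)) (lmul_nocancel hc).
Qed.

Lemma size_nf u : size (nf u) <= size u.
Proof.
elim: u => //= x u IH; rewrite size_lmul; case: (cancels x _) => //.
exact: leq_trans (leq_pred _) (leq_trans IH _).
Qed.

Lemma size_nf_lt u : ~~ reduced u -> size (nf u) < size u.
Proof.
elim: u => //= x u IH; rewrite negb_and negbK => h; rewrite size_lmul.
case hr: (reduced u); last first.
  have /IH lt_u : ~~ reduced u by rewrite hr.
  by case: (cancels x _); lia.
have hu := nf_reduced_proj_eq hr; rewrite hr orbF in h.
by rewrite (cancels_proj_eq x hu) h (proj_eq_size hu); case: (size u).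
Qed.

Lemma raag_eq_catl s u v : raag_eq e u v -> raag_eq e (s ++ u) (s ++ v).
Proof.
elim=> {u v} [u v [u' v' x|u' v' x y hxy]|u|u v _|u v w _ h1 _ h2].
- by rewrite !catA; apply/rst_step/step_cancel.
- by rewrite !catA; apply/rst_step/step_comm.
- exact: rst_refl.
- exact: rst_sym.
- exact: rst_trans h1 h2.
Qed.

Lemma lmul_raag_eq x w : raag_eq e (lmul x w) (x :: w).
Proof.
elim: w => [|y w IH] /=; first exact: rst_refl.
case: eqP => [->|_].
  by apply/rst_sym/rst_step; apply: (@step_cancel _ _ [::] w x).
case: ifP => hxy; last exact: rst_refl.
apply: rst_trans (raag_eq_catl [:: y] IH) _.
by apply/rst_step; apply: (@step_comm _ _ [::] w y x); rewrite e_sym.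
Qed.

Lemma nf_raag u : raag_eq e (nf u) u.
Proof.
elim: u => [|x u IH] /=; first exact: rst_refl.
exact: rst_trans (lmul_raag_eq _ _) (raag_eq_catl [:: x] IH).
Qed.

Lemma geodesic_reduced c : geodesic e c -> reduced c.
Proof.
move=> hg; apply: contraT => /size_nf_lt.
by rewrite ltnNge (hg _ (nf_raag c)).
Qed.

Lemma reduced_geodesic c : reduced c -> geodesic e c.
Proof.
move=> hr d /nf_raag_eq hd.
by rewrite -(proj_eq_size (nf_reduced_proj_eq hr)) -(proj_eq_size hd) size_nf.
Qed.

Lemma reduced_raag_proj_eq u v : reduced u -> reduced v -> raag_eq e u v -> proj_eq u v.
Proof.
move=> hu hv /nf_raag_eq h.
apply: proj_eq_trans (proj_eq_sym (nf_reduced_proj_eq hu)) _.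
exact: proj_eq_trans h (nf_reduced_proj_eq hv).
Qed.

(** * Commutation equivalence *)

Inductive comm_step : word n -> word n -> Prop :=
| CommStep u v x y : e x.1 y.1 -> comm_step (u ++ x :: y :: v) (u ++ y :: x :: v).

Definition comm_eq := clos_refl_sym_trans (word n) comm_step.

Lemma comm_eq_catl s u v : comm_eq u v -> comm_eq (s ++ u) (s ++ v).
Proof.
elim=> {u v} [u v [] u' v' x y hxy|u|u v _|u v w _ h1 _ h2].
- by rewrite !catA; apply/rst_step/CommStep.
- exact: rst_refl.
- exact: rst_sym.
- exact: rst_trans h1 h2.
Qed.

Lemma comm_eq_raag u v : comm_eq u v -> raag_eq e u v.
Proof.
elim=> {u v} [u v [] u' v' x y hxy|u|u v _|u v w _ h1 _ h2].
- exact/rst_step/step_comm.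
- exact: rst_refl.
- exact: rst_sym.
- exact: rst_trans h1 h2.
Qed.

Lemma comm_eq_link_move z Q R : link_word e z.1 Q -> comm_eq (Q ++ z :: R) (z :: Q ++ R).
Proof.
elim: Q => [_|y Q IH /andP [hy hQ]] /=; first exact: rst_refl.
apply: rst_trans (comm_eq_catl [:: y] (IH hQ)) _.
by apply/rst_step; apply: (@CommStep [::] (Q ++ R) y z); rewrite e_sym.
Qed.

Lemma proj_eq_comm u v : proj_eq u v -> comm_eq u v.
Proof.
elim: u v => [|z u IH] v h; first by rewrite (proj_eq_nil h); apply: rst_refl.
have hc : cancels (inv_letter z) v by rewrite -(cancels_proj_eq _ h) /= inv_letterK eqxx.
have [Q [R [hv hQ _]]] := cancelsP hc; rewrite inv_letterK /= in hv hQ; subst v.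
have hzQR : comm_eq (z :: u) (z :: Q ++ R).
  apply: (comm_eq_catl [:: z]); apply/IH/(@proj_eq_consK z).
  exact: proj_eq_trans h (@proj_eq_link_move z Q R hQ).
by apply: rst_trans hzQR _; apply/rst_sym/comm_eq_link_move.
Qed.

Lemma proj_eq_raag u v : proj_eq u v -> raag_eq e u v.
Proof. by move/proj_eq_comm/comm_eq_raag. Qed.

Lemma proj_eq_reduced u v : proj_eq u v -> reduced v -> reduced u.
Proof.
move=> huv hv; apply: geodesic_reduced => d hd; rewrite (proj_eq_size huv).
by apply: (reduced_geodesic hv); apply: rst_trans hd _; apply: proj_eq_raag.
Qed.

(** * Right-counting vectors *)

(* [blocked D T] are the letters of [T] that cannot be commuted to the left
   past letters over the vertices [D]. *)
Fixpoint blocked D T : word n :=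
  if T is z :: T' then
    if has (dep z.1) D then z :: blocked (z.1 :: D) T' else blocked D T'
  else [::].

Fixpoint unblocked D T : word n :=
  if T is z :: T' then
    if has (dep z.1) D then unblocked (z.1 :: D) T' else z :: unblocked D T'
  else [::].

Fixpoint blockers D T : seq 'I_n :=
  if T is z :: T' then
    if has (dep z.1) D then blockers (z.1 :: D) T' else blockers D T'
  else D.

Lemma blocked_eq_mem D1 D2 T : D1 =i D2 -> blocked D1 T = blocked D2 T.
Proof.
elim: T D1 D2 => [|z T IH] D1 D2 h //=.
rewrite (eq_has_r h); case: ifP => _; last exact: IH.
by congr cons; apply: IH => t; rewrite !inE h.
Qed.

Lemma blocked_cat D T1 T2 : blocked D (T1 ++ T2) = blocked D T1 ++ blocked (blockers D T1) T2.
Proof. by elim: T1 D => [|z T1 IH] D //=; case: ifP => _ //=; rewrite IH. Qed.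

Lemma size_blocked D T : size (blocked D T) <= size T.
Proof.
elim: T D => [|z T IH] D //=; case: ifP => _ /=; first exact: IH.
exact: leq_trans (IH _) (leqnSn _).
Qed.

Lemma size_blocked_sub D1 D2 T : {subset D1 <= D2} ->
  size (blocked D1 T) <= size (blocked D2 T).
Proof.
elim: T D1 D2 => [|z T IH] D1 D2 h //=.
case h1: (has (dep z.1) D1).
  have -> : has (dep z.1) D2 by case/hasP: h1 => d /h hd hdep; apply/hasP; exists d.
  by rewrite /= ltnS; apply: IH => t; rewrite !inE => /orP [->|/h ->]; rewrite ?orbT.
case: ifP => _ /=; last exact: IH.
by apply: leq_trans (IH D1 (z.1 :: D2) _) (leqnSn _) => t ht; rewrite inE h ?orbT.
Qed.

Lemma blockers_sub D T : {subset D <= blockers D T}.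
Proof.
elim: T D => [|z T IH] D //=; case: ifP => _ // t ht.
by apply: IH; rewrite inE ht orbT.
Qed.

Lemma size_blocked_swap D x y v : e x.1 y.1 ->
  size (blocked D (x :: y :: v)) = size (blocked D (y :: x :: v)).
Proof.
move=> hxy; have hyx : dep y.1 x.1 = false by rewrite edge_ndep // e_sym.
rewrite /= (edge_ndep hxy) hyx.
case: (has (dep x.1) D); case: (has (dep y.1) D) => //=.
by congr (_.+2); congr size; apply: blocked_eq_mem => t; rewrite !inE orbCA.
Qed.

Lemma size_blocked_proj_eq D u v : proj_eq u v -> size (blocked D u) = size (blocked D v).
Proof.
move/proj_eq_comm; elim=> {u v} [u v [] u' v' x y hxy|u|u v _ ->|u v w _ -> _ ->] //.
by rewrite !blocked_cat !size_cat size_blocked_swap.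
Qed.

Lemma blocked_link_cat a Q R : link_word e a Q -> blocked [:: a] (Q ++ R) = blocked [:: a] R.
Proof.
elim: Q => [|y Q IH] //= /andP [hy hQ].
by rewrite orbF dep_sym (edge_ndep hy) IH.
Qed.

Lemma proj_blocked D T p q : dep p q -> has (fun d => (d == p) || (d == q)) D ->
  proj p q (unblocked D T) = [::] /\ proj p q (blocked D T) = proj p q T.
Proof.
move=> hpq; elim: T D => [|z T IH] D hD //=.
case: ifP => hz.
  have [h1 h2] := IH (z.1 :: D) (introT orP (or_intror hD)).
  by rewrite /proj /= -!/(proj p q _) h1 h2.
have hzpq : ((z.1 == p) || (z.1 == q)) = false.
  by apply: contraFF hz => hzpq; apply: sub_has hD => d; apply: dep_pair hzpq.
by have [h1 h2] := IH D hD; rewrite /proj /= hzpq -!/(proj p q _) h1 h2.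
Qed.

Lemma proj_unblocked_blocked D T p q : dep p q ->
  proj p q T = proj p q (unblocked D T) ++ proj p q (blocked D T).
Proof.
move=> hpq; elim: T D => [|z T IH] D //=.
case hz: (has (dep z.1) D); rewrite /proj /= -!/(proj p q _); last by rewrite (IH D); case: ifP.
case hzc: ((z.1 == p) || (z.1 == q)); last exact: IH.
have hD : has (fun d => (d == p) || (d == q)) (z.1 :: D) by rewrite /= hzc.
by have [h1 h2] := proj_blocked T hpq hD; rewrite h1 h2.
Qed.

Lemma proj_eq_unblocked_blocked z T :
  proj_eq (z :: T) (unblocked [:: z.1] T ++ z :: blocked [:: z.1] T).
Proof.
move=> p q hpq; rewrite /proj filter_cat /= -!/(proj p q _).
case hzc: ((z.1 == p) || (z.1 == q)); last exact: proj_unblocked_blocked.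
have hD : has (fun d => (d == p) || (d == q)) [:: z.1] by rewrite /= hzc.
by have [h1 h2] := proj_blocked T hpq hD; rewrite h1 h2.
Qed.

Lemma unblocked_link D T a : a \in D -> link_word e a (unblocked D T).
Proof.
elim: T D => [|z T IH] D hD //=.
case: ifP => hz; first by apply: IH; rewrite inE hD orbT.
rewrite /link_word /= IH // andbT e_sym; apply: ndep_edge.
by apply: contraFF hz => hza; apply/hasP; exists a.
Qed.

Lemma size_blocked_link_lmul a z V : e a z.1 ->
  size (blocked [:: a] (lmul z V)) = size (blocked [:: a] V).
Proof.
move=> ha; have hd : dep z.1 a = false by rewrite edge_ndep // e_sym.
case hc: (cancels z V).
  have [Q [R [-> hQ ->]]] := cancelsP hc.
  by rewrite (size_blocked_proj_eq _ (@proj_eq_link_move (inv_letter z) Q R hQ)) /= hd.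
by rewrite (size_blocked_proj_eq _ (lmul_nocancel (negbT hc))) /= hd.
Qed.

(* For reduced [c], [rc c i] is the entry f_i of the right-counting vector. *)
Definition rc c i : nat :=
  if drop i c is z :: T then size (blocked [:: z.1] T) else 0.

Lemma rc_cons z c j : rc (z :: c) j.+1 = rc c j.
Proof. by []. Qed.

Lemma rc_nth c i x0 : i < size c -> rc c i = size (blocked [:: (nth x0 c i).1] (drop i.+1 c)).
Proof. by move=> h; rewrite /rc (drop_nth x0 h). Qed.

Lemma rc_entry_rc c x0 i : reduced c -> i < size c -> rc_entry e c x0 i (rc c i).
Proof.
move=> hr hi; rewrite (rc_nth x0 hi).
set z := nth x0 c i; set T := drop i.+1 c.
have hd : drop i c = z :: T by rewrite /z /T -drop_nth.
split.
  exists (unblocked [:: z.1] T), (blocked [:: z.1] T); split => //.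
    by apply: unblocked_link; rewrite inE.
  by rewrite hd; apply/proj_eq_raag/proj_eq_unblocked_blocked.
move=> _ [x [y [hx <- /nf_raag_eq]]]; rewrite hd nf_cat => hzy.
have hzT : proj_eq (z :: T) (foldr lmul (lmul z (nf y)) x).
  by apply: proj_eq_trans hzy; apply/proj_eq_sym/nf_reduced_proj_eq; rewrite -hd reduced_drop.
have size_blocked_zT : size (blocked [:: z.1] (z :: T)) = (size (blocked [:: z.1] T)).+1.
  by rewrite /= dep_refl /=; congr (size _).+1; apply: blocked_eq_mem => t; rewrite !inE orbb.
have size_blocked_foldr : size (blocked [:: z.1] (foldr lmul (lmul z (nf y)) x)) =
    size (blocked [:: z.1] (lmul z (nf y))).
  by elim: x hx {hzy hzT} => //= l x IH /andP [hl /IH <-]; rewrite size_blocked_link_lmul.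
rewrite -ltnS -size_blocked_zT (size_blocked_proj_eq _ hzT) size_blocked_foldr.
apply: leq_trans (size_blocked _ _) _; rewrite size_lmul.
by have := size_nf y; case: (cancels z _) => /=; lia.
Qed.

Lemma rc_vector_rc c f i : reduced c -> rc_vector e c f -> i < size c -> nth 0 f i = rc c i.
Proof.
case: c => [|x0 c] hr [_ hf] hi //.
have [hf_entry hf_min] := hf x0 i hi; have [hrc_entry hrc_min] := rc_entry_rc x0 hr hi.
by apply/eqP; rewrite eqn_leq (hf_min _ hrc_entry) (hrc_min _ hf_entry).
Qed.

Lemma rc_lt c i j x0 : i < j < size c -> dep (nth x0 c i).1 (nth x0 c j).1 -> rc c j < rc c i.
Proof.
move=> /andP [hij hj] hdep; have hi := ltn_trans hij hj.
rewrite (rc_nth x0 hi) (rc_nth x0 hj).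
have -> : drop i.+1 c = take (j - i.+1) (drop i.+1 c) ++ nth x0 c j :: drop j.+1 c.
  by rewrite -(drop_nth x0 hj) -{2}(subnK hij) -drop_drop cat_take_drop.
rewrite blocked_cat size_cat /=.
have -> : has (dep (nth x0 c j).1) (blockers [:: (nth x0 c i).1] (take (j - i.+1) (drop i.+1 c))).
  by apply/hasP; exists (nth x0 c i).1; rewrite 1?dep_sym // blockers_sub ?inE.
rewrite /= addnS ltnS; apply: leq_trans (leq_addl _ _).
by apply: size_blocked_sub => t; rewrite !inE => ->.
Qed.

(** * Sorting by the right-counting vector *)

Definition rc_sorted c : Prop :=
  (forall i j, i < j < size c -> rc c j <= rc c i) /\
  (forall x0 i j, i < j < size c -> rc c i = rc c j ->
      ((nth x0 c i).1 < (nth x0 c j).1) && e (nth x0 c i).1 (nth x0 c j).1).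

Lemma rc_sorted_cons z c : rc_sorted (z :: c) -> rc_sorted c.
Proof.
case=> hA hB; split => [i j hij|x0 i j hij]; first exact: (hA i.+1 j.+1).
exact: (hB x0 i.+1 j.+1).
Qed.

Lemma rc_sorted_consI z c : rc_sorted c ->
  (forall j, 0 < j < size (z :: c) -> rc (z :: c) j <= rc (z :: c) 0) ->
  (forall x0 j, 0 < j < size (z :: c) -> rc (z :: c) 0 = rc (z :: c) j ->
      (z.1 < (nth x0 c j.-1).1) && e z.1 (nth x0 c j.-1).1) ->
  rc_sorted (z :: c).
Proof.
move=> [hA hB] h0 hB0; split => [[|i] [|j] //|x0 [|i] [|j] //]; first exact: h0.
- by rewrite ltnS !rc_cons; apply: hA.
- exact: hB0.
- by rewrite ltnS !rc_cons; apply: hB.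
Qed.

Definition movable y w := cancels (inv_letter y) w.

(* The value of f that [y] receives when brought to the front of [w]. *)
Definition rc_front y w := size (blocked [:: y.1] (lmul (inv_letter y) w)).

Lemma movable_proj_eq y u v : proj_eq u v -> movable y u = movable y v.
Proof. exact: cancels_proj_eq. Qed.

Lemma rc_front_proj_eq y u v : proj_eq u v -> rc_front y u = rc_front y v.
Proof. by move=> h; apply/size_blocked_proj_eq/lmul_proj_eq. Qed.

Lemma movable_front y w : movable y w -> proj_eq w (y :: lmul (inv_letter y) w).
Proof.
by case/cancelsP => Q [R [-> hQ ->]]; rewrite inv_letterK; apply: proj_eq_link_move.
Qed.

Lemma movable_link c j x0 : j < size c -> link_word e (nth x0 c j).1 (take j c) ->
  movable (nth x0 c j) c /\ rc_front (nth x0 c j) c = rc c j.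
Proof.
move=> hj hlink.
have hc : take j c ++ nth x0 c j :: drop j.+1 c = c by rewrite -drop_nth ?cat_take_drop.
have [hm hl] := lmul_inv_link_cat (drop j.+1 c) hlink; rewrite hc in hm hl.
by rewrite /rc_front hl blocked_link_cat // (rc_nth x0 hj).
Qed.

Lemma proj_eq_head_later z c z' c' : proj_eq (z :: c) (z' :: c') -> z != z' ->
  exists2 k, 0 < k < size (z :: c) &
    nth z (z :: c) k = z' /\ rc (z :: c) k = rc (z' :: c') 0.
Proof.
move=> h hzz'.
have : movable z' (z :: c) by rewrite (movable_proj_eq _ h) /movable /= inv_letterK eqxx.
rewrite /movable /= inv_letterK (negbTE hzz') /= => /andP [he hc].
have [Q [R [hcQR hQ _]]] := cancelsP hc; rewrite inv_letterK in hcQR.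
have hk : (size Q).+1 < size (z :: c) by rewrite hcQR /= size_cat /= ltnS -addSnnS leq_addr.
have hnth : nth z (z :: c) (size Q).+1 = z' by rewrite hcQR /= nth_cat ltnn subnn.
exists (size Q).+1 => //; split => //.
have hlink : link_word e (nth z (z :: c) (size Q).+1).1 (take (size Q).+1 (z :: c)).
  by rewrite hnth hcQR /= take_size_cat //= /link_word /= he.
have [_ <-] := movable_link hk hlink.
by rewrite hnth (rc_front_proj_eq _ h) /rc_front /= inv_letterK eqxx.
Qed.

Lemma rc_sorted_inj c c' : proj_eq c c' -> rc_sorted c -> rc_sorted c' -> c = c'.
Proof.
elim: c c' => [|z c IH] [|z' c'] h s s'.
- by [].
- by have := proj_eq_nil h.
- by have := proj_eq_nil (proj_eq_sym h).
have [hzz|hzz'] := eqVneq z z'.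
  by subst z'; rewrite (IH c' (proj_eq_consK h) (rc_sorted_cons s) (rc_sorted_cons s')).
have [k hk [hnth hrc]] := proj_eq_head_later h hzz'.
have hz'z : z' != z by rewrite eq_sym.
have [k' hk' [hnth' hrc']] := proj_eq_head_later (proj_eq_sym h) hz'z.
have le0k := s.1 0 k hk; have le0k' := s'.1 0 k' hk'.
have eq0k : rc (z :: c) 0 = rc (z :: c) k by apply/eqP; rewrite eqn_leq le0k hrc -hrc' le0k'.
have eq0k' : rc (z' :: c') 0 = rc (z' :: c') k' by apply/eqP; rewrite eqn_leq le0k' hrc' -hrc le0k.
have /andP [lt1 _] := s.2 z 0 k hk eq0k.
have /andP [lt2 _] := s'.2 z' 0 k' hk' eq0k'.
by move: lt1 lt2; rewrite /= hnth hnth' => /ltn_trans h1 /h1; rewrite ltnn.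
Qed.

Lemma rc_sorted_greedy_cons y c0 c1 : movable y c0 ->
  (forall y', movable y' c0 -> rc_front y' c0 < rc_front y c0 \/
                               rc_front y' c0 = rc_front y c0 /\ y.1 <= y'.1) ->
  proj_eq (y :: c1) c0 -> rc_sorted c1 -> rc_sorted (y :: c1).
Proof.
move=> hy hmax hph hs1.
have rc0 : rc (y :: c1) 0 = rc_front y c0.
  by rewrite -(rc_front_proj_eq _ hph) /rc_front /= inv_letterK eqxx.
have hcand x0 j : j < size (y :: c1) -> link_word e (nth x0 (y :: c1) j).1 (take j (y :: c1)) ->
    rc (y :: c1) j < rc (y :: c1) 0 \/
    rc (y :: c1) j = rc (y :: c1) 0 /\ y.1 <= (nth x0 (y :: c1) j).1.
  move=> hj /(movable_link hj) [hm <-]; rewrite rc0 (rc_front_proj_eq _ hph).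
  by apply: hmax; rewrite -(movable_proj_eq _ hph).
have le10 : 1 < size (y :: c1) -> rc (y :: c1) 1 <= rc (y :: c1) 0.
  move=> h1; case hd: (dep y.1 (nth y (y :: c1) 1).1).
    by apply/ltnW/(@rc_lt _ 0 1 y) => //; rewrite h1.
  have hlink : link_word e (nth y (y :: c1) 1).1 (take 1 (y :: c1)).
    by rewrite /link_word /= take0 andbT e_sym ndep_edge.
  by case: (hcand y 1 h1 hlink) => [/ltnW|[-> _]].
have le_j0 j : 0 < j < size (y :: c1) -> rc (y :: c1) j <= rc (y :: c1) 0.
  move=> /andP [j_gt0 hj]; have h1 : 1 < size (y :: c1) := leq_ltn_trans j_gt0 hj.
  case: j j_gt0 hj => [|[|j]] // _ hj.
  exact: leq_trans (hs1.1 0 j.+1 hj) (le10 h1).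
apply: rc_sorted_consI => // x0 [|j] // hj heq.
(* a letter before position j.+1 depending on it would force f_j.+1 < f_0 *)
have hind k : k < j.+1 -> ~~ dep (nth x0 (y :: c1) k).1 (nth x0 c1 j).1.
  move=> hkj; apply/negP => /(rc_lt (i:=k) (j:=j.+1)); rewrite hkj => /(_ hj).
  rewrite -heq ltnNge; case: k hkj => [|k] hkj; first by rewrite leqnn.
  by rewrite le_j0 // (ltn_trans hkj).
have hjs : j.+1 < size (y :: c1) by case/andP: hj.
have hlink : link_word e (nth x0 (y :: c1) j.+1).1 (take j.+1 (y :: c1)).
  apply/(all_nthP x0) => k; rewrite size_takel ?(ltnW hjs) // => hk.
  by rewrite nth_take // e_sym ndep_edge //; apply/negbTE/hind.
have hE : e y.1 (nth x0 c1 j).1 by apply/ndep_edge/negbTE/(hind 0).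
case: (hcand x0 j.+1 hjs hlink) => [|[_ hle]]; first by rewrite heq ltnn.
by rewrite ltn_neqAle hle (edge_neq hE) hE.
Qed.

Lemma exists_rc_sorted c0 : exists c, proj_eq c c0 /\ rc_sorted c.
Proof.
have [m] := ubnP (size c0); elim: m c0 => // m IH [_|z0 c00 hm].
  by exists [::]; split => //; split => [i j|x0 i j] /andP [_].
set c0 := z0 :: c00.
have hz0 : movable z0 c0 by rewrite /movable /= inv_letterK eqxx.
(* maximising [K] maximises [rc_front], then minimises the vertex *)
pose K y := rc_front y c0 * n + (n - y.1).
have [y hy hmax] := @arg_maxnP _ z0 (movable^~ c0) K hz0.
have [c1 [hc1 hs1]] : exists c, proj_eq c (lmul (inv_letter y) c0) /\ rc_sorted c.
  by apply: IH; rewrite size_lmul -/(movable y c0) hy; move: hm; rewrite /c0 /=.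
have hph : proj_eq (y :: c1) c0.
  exact: proj_eq_trans (proj_eq_cons y hc1) (proj_eq_sym (movable_front hy)).
exists (y :: c1); split => //.
apply: rc_sorted_greedy_cons hy _ hph hs1 => y' hy'.
by have := hmax y' hy'; rewrite /K; have := ltn_ord y.1; have := ltn_ord y'.1; nia.
Qed.

Lemma canonical_expr_rc_sorted w c : canonical_expr e w c -> reduced c /\ rc_sorted c.
Proof.
case=> _ [/geodesic_reduced hr [f [hf [hA hB]]]]; split => //.
split=> [i j|x0 i j] /andP [hij hj]; have hi := ltn_trans hij hj;
  rewrite -(rc_vector_rc hr hf hi) -(rc_vector_rc hr hf hj).
  by apply: hA; rewrite hij.
by move=> hf_ij; apply: hB; rewrite ?hij.
Qed.

Lemma rc_sorted_canonical_expr w c : raag_eq e c w -> reduced c -> rc_sorted c ->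
  canonical_expr e w c.
Proof.
move=> hcw hr [hA hB]; split=> //; split; first exact: reduced_geodesic.
exists (mkseq (rc c) (size c)); split; first split.
- by rewrite size_mkseq.
- by move=> x0 i hi; rewrite nth_mkseq //; apply: rc_entry_rc.
split=> [i j|x0 i j] /andP [hij hj]; have hi := ltn_trans hij hj; rewrite !nth_mkseq //.
  by apply: hA; rewrite hij.
by move=> hrc; apply: hB; rewrite ?hij.
Qed.

End RightAngledArtinGroup.

Theorem lemma3p2 (n : nat) (e : rel 'I_n)
  (e_sym : symmetric e) (e_irr : irreflexive e) (w : word n) :
  exists! c : word n, canonical_expr e w c.
Proof.
have [c [hc hs]] := exists_rc_sorted e_sym e_irr (nf e w).
have hr : reduced e c := proj_eq_reduced e_sym e_irr hc (nf_reduced e_sym e_irr w).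
have hcw : raag_eq e c w.
  by apply: rst_trans (nf_raag e_sym w); apply: proj_eq_raag hc.
exists c; split; first exact: rc_sorted_canonical_expr.
move=> c' hc'; have [hr' hs'] := canonical_expr_rc_sorted e_sym e_irr hc'.
have hcc' : raag_eq e c c' by apply: rst_trans hcw _; apply: rst_sym; case: hc'.
exact (rc_sorted_inj e_sym e_irr (reduced_raag_proj_eq e_sym e_irr hr hr' hcc') hs hs').
Qed.
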